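(* Let $\mathcal{G}$ be a locally finite one-ended Borel graph on a standard Borel space $X$, and let $\mathcal{F}\subseteq\mathcal{R}_{\mathcal{G}}$ be a finite Borel equivalence relation each of whose classes induces a connected subgraph of $\mathcal{G}$. Let $Q\subseteq\mathcal{F}$ be a Borel set (of pairs, regarded as edges) such that every $\mathcal{F}$-class still induces a connected subgraph of $\mathcal{G}\setminus Q$. Then $\mathcal{G}\setminus Q$ is one-ended.
   Context: A Borel graph is a symmetric Borel set $\mathcal G\subseteq X^2$; it is one-ended if every connected component is one-ended, i.e. removing any finite set of vertices from it leaves exactly one infinite connected component. $\mathcal R_{\mathcal G}$ is the connectedness relation of $\mathcal G$. A finite Borel equivalence relation is a Borel equivalence relation with finite classes. *)

From HB Require Import structures.
From mathcomp Require Import all_boot all_order all_algebra.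
From mathcomp Require Import all_classical all_reals all_analysis.
From mathcomp Require Import Rstruct Rstruct_topology.
Set Implicit Arguments. Unset Strict Implicit. Unset Printing Implicit Defensive.
Import Order.TTheory GRing.Theory Num.Theory.
Local Open Scope classical_set_scope.

(* Standard Borel space: a measurable space that is Borel-isomorphic to a
   Borel subset of the real line (Kuratowski's theorem: this is equivalent
   to being the Borel space of a Polish topology). *)
Definition standard_borel {d} (X : measurableType d) : Prop :=
  exists f : X -> measurableTypeR Rdefinitions.R,
    injective f /\ measurable_fun setT f /\
    (forall A : set X, measurable A -> measurable (f @` A)).

Definition borel_graph {d} (X : measurableType d) (G : set (X * X)) : Prop :=
  measurable G /\ (forall x y, G (x, y) -> G (y, x)).

Definition locally_finite {T} (G : set (T * T)) : Prop :=
  forall x, finite_set [set y | G (x, y)].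

(* conn_in G A x y : x and y are joined by a G-path all of whose vertices lie
   in A (i.e. x, y are in the same component of the subgraph induced on A). *)
Inductive conn_in {T} (G : set (T * T)) (A : set T) (x : T) : T -> Prop :=
| conn_refl : A x -> conn_in G A x x
| conn_step : forall y z, conn_in G A x y -> G (y, z) -> A z -> conn_in G A x z.

Definition RG {T} (G : set (T * T)) (x y : T) : Prop := conn_in G setT x y.

Definition component {T} (G : set (T * T)) (x : T) : set T := [set y | RG G x y].

Definition one_ended_component {T} (G : set (T * T)) (C : set T) : Prop :=
  forall S : set T, finite_set S ->
    exists y, (C `\` S) y /\ infinite_set [set z | conn_in G (C `\` S) y z] /\
      forall y', (C `\` S) y' -> infinite_set [set z | conn_in G (C `\` S) y' z] ->
        conn_in G (C `\` S) y y'.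

Definition one_ended {T} (G : set (T * T)) : Prop :=
  forall x, one_ended_component G (component G x).

Definition finite_borel_equiv {d} (X : measurableType d) (F : set (X * X)) : Prop :=
  measurable F /\
  (forall x, F (x, x)) /\
  (forall x y, F (x, y) -> F (y, x)) /\
  (forall x y z, F (x, y) -> F (y, z) -> F (x, z)) /\
  (forall x, finite_set [set y | F (x, y)]).

Definition classes_connected {T} (G F : set (T * T)) : Prop :=
  forall x y, F (x, y) -> conn_in G [set z | F (x, z)] x y.

(* G \ Q where the pairs of Q are regarded as (undirected) edges: an edge
   {x,y} is removed if (x,y) or (y,x) lies in Q. *)
Definition remove_edges {T} (G Q : set (T * T)) : set (T * T) :=
  [set p | G p /\ ~ Q p /\ ~ Q (p.2, p.1)].

From HB Require Import structures.
From mathcomp Require Import all_boot all_order all_algebra.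
From mathcomp Require Import all_classical all_reals all_analysis.
Set Implicit Arguments. Unset Strict Implicit. Unset Printing Implicit Defensive.
Local Open Scope classical_set_scope.

(* Write G' for G \ Q.  A removed edge lies inside an F-class, which stays
   G'-connected, so a G-path whose vertices have F-classes inside a set E can
   be rerouted into a G'-path inside E; in particular G and G' have the same
   components.  Given a finite S, remove instead its (finite) F-saturation S'
   and take the unique infinite G-component K of C \ S'.  Local finiteness
   makes (C \ S') \ K finite: every other G-component is finite and touches
   one of the finitely many neighbours of S'.  The G-paths of K reroute into
   C \ S, so K lies in one infinite G'-component of C \ S, and any infinite
   G'-component of C \ S meets K, since it avoids only finitely many points
   of K. *)

Definition saturation {T} (F : set (T * T)) (A : set T) : set T :=
  \bigcup_(s in A) [set w | F (s, w)].

Section Connectivity.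
Context {T : Type}.
Implicit Types (G : set (T * T)) (A B : set T).

Lemma conn_in_ends G A x y : conn_in G A x y -> A x /\ A y.
Proof. by elim=> [Ax|y0 z _ [Ax _] _ Az]. Qed.

Lemma conn_in_sub G1 G2 A B x y :
  G1 `<=` G2 -> A `<=` B -> conn_in G1 A x y -> conn_in G2 B x y.
Proof.
move=> G12 AB; elim=> [Ax|y0 z _ IH e Az]; first exact/conn_refl/AB.
by apply: (conn_step IH); [apply: G12|apply: AB].
Qed.

Lemma conn_in_trans G A x y z :
  conn_in G A x y -> conn_in G A y z -> conn_in G A x z.
Proof. by move=> Hxy; elim=> [//|y0 z0 _ IH e Az]; apply: conn_step IH e Az. Qed.

Lemma conn_in_sym G A x y :
  (forall u v, G (u, v) -> G (v, u)) -> conn_in G A x y -> conn_in G A y x.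
Proof.
move=> Gsym; elim=> [Ax|y0 z H IH e Az]; first exact: conn_refl.
apply: conn_in_trans _ IH.
exact: conn_step (conn_refl G Az) (Gsym _ _ e) (conn_in_ends H).2.
Qed.

Lemma component_step G x u v :
  component G x u -> G (u, v) -> component G x v.
Proof. by move=> xu e; apply: (conn_step xu e). Qed.

Lemma conn_in_exit G A b w : A b -> conn_in G setT b w ->
  conn_in G A b w \/ exists n s, [/\ conn_in G A b n, G (n, s) & ~ A s].
Proof.
move=> Ab; elim=> [_|w0 z _ IH e _]; first by left; apply: conn_refl.
case: IH => [bw0|]; last by right.
have [Az|nAz] := pselect (A z); first by left; apply: conn_step bw0 e Az.
by right; exists w0, z.
Qed.

End Connectivity.

Lemma finite_outside_infinite_component {T} (G : set (T * T)) (S : set T) x y :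
  (forall u v, G (u, v) -> G (v, u)) -> locally_finite G -> finite_set S ->
  (component G x `\` S) y ->
  (forall y', (component G x `\` S) y' ->
    infinite_set [set z | conn_in G (component G x `\` S) y' z] ->
    conn_in G (component G x `\` S) y y') ->
  finite_set [set b | (component G x `\` S) b /\
                      ~ conn_in G (component G x `\` S) y b].
Proof.
move=> Gsym lfG finS Dy uniq.
set D := component G x `\` S; set K := conn_in G D y.
set N := [set n | (D n /\ ~ K n) /\ exists2 s, S s & G (n, s)].
have finN : finite_set N.
  apply: (sub_finite_set (B := \bigcup_(s in S) [set w | G (s, w)])).
    by move=> n [_ [s Ss e]]; exists s => //; apply: Gsym.
  by apply: bigcup_finite => // s _; apply: lfG.
apply: (sub_finite_set (B := \bigcup_(n in N) conn_in G D n)); last first.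
  apply: bigcup_finite => // n [[Dn nKn] _].
  by apply: contrapT => infn; apply: nKn; apply: uniq.
move=> b [Db nKb].
have by_ : conn_in G setT b y.
  exact: conn_in_trans (conn_in_sym Gsym Db.1) Dy.1.
case: (conn_in_exit Db by_) => [/(conn_in_sym Gsym)//|[n [s [bn ns nDs]]]].
have Dn := (conn_in_ends bn).2.
have Ss : S s.
  by apply: contrapT => nSs; apply: nDs; split; [exact: component_step Dn.1 ns|].
exists n; last exact: conn_in_sym bn.
split; last by exists s.
by split=> // Kn; apply: nKb; apply: conn_in_trans Kn (conn_in_sym Gsym bn).
Qed.

Lemma finite_saturation {T} (F : set (T * T)) (A : set T) :
  (forall x, finite_set [set y | F (x, y)]) -> finite_set A ->
  finite_set (saturation F A).
Proof. by move=> Ffin finA; apply: bigcup_finite. Qed.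

Lemma sub_saturation {T} (F : set (T * T)) (A : set T) :
  (forall x, F (x, x)) -> A `<=` saturation F A.
Proof. by move=> Frefl s As; exists s. Qed.

Lemma saturation_setD_component {T} (G F : set (T * T)) (S : set T) x :
  (forall u v, F (u, v) -> RG G u v) -> (forall u v, F (u, v) -> F (v, u)) ->
  saturation F (component G x `\` saturation F S) `<=` component G x `\` S.
Proof.
move=> FRG Fsym z [u [xu nSu] Fuz]; split; first exact: conn_in_trans xu (FRG _ _ Fuz).
by move=> Sz; apply: nSu; exists z => //; apply: Fsym.
Qed.

Lemma remove_edges_sub {T} (G Q : set (T * T)) : remove_edges G Q `<=` G.
Proof. by move=> p []. Qed.

Lemma remove_edges_sym {T} (G Q : set (T * T)) :
  (forall u v, G (u, v) -> G (v, u)) ->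
  forall u v, remove_edges G Q (u, v) -> remove_edges G Q (v, u).
Proof. by move=> Gsym u v [e [nQ nQ']]; split; [apply: Gsym|]. Qed.

Section RemoveEdges.
Context {T : Type} (G F Q : set (T * T)).
Hypotheses (QF : Q `<=` F) (Fsym : forall u v, F (u, v) -> F (v, u))
  (ccQ : classes_connected (remove_edges G Q) F).

Lemma removed_edge_in_class u v :
  G (u, v) -> ~ remove_edges G Q (u, v) -> F (u, v).
Proof.
move=> e nG'.
have [/QF//|nQ] := pselect (Q (u, v)).
have [/QF/Fsym//|nQ'] := pselect (Q (v, u)).
by exfalso; apply: nG'.
Qed.

Lemma conn_in_remove_edges (D E : set T) a b :
  D `<=` E -> saturation F D `<=` E ->
  conn_in G D a b -> conn_in (remove_edges G Q) E a b.
Proof.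
move=> DE satDE; elim=> [Da|w z H IH e Dz]; first exact/conn_refl/DE.
have [e'|ne'] := pselect (remove_edges G Q (w, z)).
  by apply: conn_step IH e' (DE _ Dz).
apply: conn_in_trans IH (conn_in_sub _ _ (ccQ (removed_edge_in_class e ne'))) => //.
by move=> t Fwt; apply: satDE; exists w => //; apply: (conn_in_ends H).2.
Qed.

Lemma component_remove_edges x : component (remove_edges G Q) x = component G x.
Proof.
apply/seteqP; split=> z; first exact: conn_in_sub (@remove_edges_sub _ G Q) _.
exact: conn_in_remove_edges.
Qed.

End RemoveEdges.

Lemma unique_infinite_component_transfer {T} (G G' : set (T * T)) (D D' : set T) y :
  (forall u v, G' (u, v) -> G' (v, u)) ->
  (forall a b, conn_in G D a b -> conn_in G' D' a b) ->
  finite_set (D' `\` D) ->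
  D y -> infinite_set [set z | conn_in G D y z] ->
  finite_set [set b | D b /\ ~ conn_in G D y b] ->
  D' y /\ infinite_set [set z | conn_in G' D' y z] /\
    (forall y', D' y' -> infinite_set [set z | conn_in G' D' y' z] ->
      conn_in G' D' y y').
Proof.
move=> G'sym conv finDD' Dy infK finB; split; [|split].
- exact: (conn_in_ends (conv _ _ (conn_refl G Dy))).1.
- by apply: sub_infinite_set infK => z; apply: conv.
move=> y' _ infW.
have finU : finite_set ((D' `\` D) `|` [set b | D b /\ ~ conn_in G D y b]).
  by rewrite finite_setU.
have [z [y'z nz]] := infinite_setN0 (infinite_setD infW finU).
have D'z := (conn_in_ends y'z).2.
have Dz : D z by apply: contrapT => nDz; apply: nz; left.
have Kz : conn_in G D y z by apply: contrapT => nKz; apply: nz; right.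
exact: conn_in_trans (conv _ _ Kz) (conn_in_sym G'sym y'z).
Qed.

Theorem proposition3p9 (d : measure_display) (X : measurableType d)
  (G F Q : set (X * X)) :
  standard_borel X ->
  borel_graph G -> locally_finite G -> one_ended G ->
  finite_borel_equiv F -> (forall x y, F (x, y) -> RG G x y) ->
  classes_connected G F ->
  measurable Q -> Q `<=` F ->
  classes_connected (remove_edges G Q) F ->
  one_ended (remove_edges G Q).
Proof.
move=> _ [_ Gsym] lfG oneG [_ [Frefl [Fsym [_ Ffin]]]] FRG _ _ QF ccQ x.
rewrite (component_remove_edges QF Fsym ccQ) => S finS.
set C := component G x; set S' := saturation F S.
have finS' : finite_set S' by apply: finite_saturation.
have [y [Dy [infK uniqK]]] := oneG x S' finS'.
have satD := saturation_setD_component (S := S) (x := x) FRG Fsym.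
exists y; apply: (unique_infinite_component_transfer (D := C `\` S')).
- exact: remove_edges_sym.
- move=> a b; apply: (conn_in_remove_edges QF Fsym ccQ _ satD).
  exact: subset_trans (sub_saturation Frefl) satD.
- apply: sub_finite_set finS' => z [[Cz _] nD].
  by apply: contrapT => nS'z; apply: nD.
- exact: Dy.
- exact: infK.
- exact: finite_outside_infinite_component.
Qed.
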